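(* Let $a,b\in E_{d+1}$ be linearly independent and satisfy $(a,a)=(b,b)=(a,b)=0$. Then $d+1\ge4$, and there is a $\Lambda\in G_0$ such that $\Lambda a=e_0+e_1$ and $\Lambda b=\pm(\varepsilon e_{d-1}+e_d)$, where $\varepsilon=\pm1$. Moreover, any $x\in E_{d+1}$ such that $(x,a)=(x,b)=(x,x)=0$ is a linear combination of $a$ and $b$.
   Context: Let $d\ge1$. $E_{d+1}=\mathbb R^{d+1}$ with the bilinear form $(x,y)=x^0y^0+x^dy^d-\sum_{j=1}^{d-1}x^jy^j$ and canonical basis $e_0,\dots,e_d$. $G_0$ is the connected component of the identity of the group of real linear maps of $E_{d+1}$ preserving this form. *)

From HB Require Import structures.
From mathcomp Require Import all_boot all_order all_algebra.
From mathcomp Require Import all_classical all_reals all_analysis.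
Set Implicit Arguments. Unset Strict Implicit. Unset Printing Implicit Defensive.
Import Order.TTheory GRing.Theory Num.Theory.
Import numFieldTopology.Exports.
Local Open Scope ring_scope.
Local Open Scope classical_set_scope.

(* E_{d+1} = R^{d+1}, represented as column vectors 'cV[R]_(d.+1),
   coordinates indexed 0..d. *)

Definition bform (R : realType) (d : nat) (x y : 'cV[R]_(d.+1)) : R :=
  x ord0 0 * y ord0 0 + x ord_max 0 * y ord_max 0
  - \sum_(j < d.+1 | (0 < (j : nat))%N && ((j : nat) < d)%N) x j 0 * y j 0.

Definition Ogroup (R : realType) (d : nat) : set 'M[R]_(d.+1) :=
  [set L | forall x y, bform (L *m x) (L *m y) = bform x y].

Definition G0 (R : realType) (d : nat) : set 'M[R]_(d.+1) :=
  connected_component (@Ogroup R d) 1%:M.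

Definition evec (R : realType) (d k : nat) : 'cV[R]_(d.+1) :=
  delta_mx (inord k) 0.

From HB Require Import structures.
From mathcomp Require Import all_boot all_order all_algebra.
From mathcomp Require Import all_classical all_reals all_analysis.
From mathcomp Require Import ring lra zify.
Import Order.TTheory GRing.Theory Num.Theory.
Import numFieldTopology.Exports.
Local Open Scope ring_scope.
Local Open Scope classical_set_scope.

(* The form is positive definite on span(e_0, e_d) and negative definite on the
   middle coordinates.  An isotropic vector whose middle (resp. end) coordinates
   vanish is therefore 0; applied to suitable combinations of a and b this forces
   d >= 3 and shows that x |-> (x^0, x^d) is injective on span(a, b), which gives
   the maximality of span(a, b).

   For the normal form we only use reflections.  If x, y are isotropic with
   (x, y) <> 0, the reflection in x - y maps x to y and fixes every vector
   orthogonal to both, so a few reflections take a to e_0 + e_1 and then b to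
   e e_{d-1} + e_d with e = +-1.  A product of two reflections in vectors of the
   same sign lies in G_0: move one vector to the other along a segment that
   avoids the null cone.  Hence every product of reflections lies in one of the
   cosets c G_0, where c is a product of reflections in e_d and e_{d-1}; such a c
   fixes e_0 + e_1 and maps e e_{d-1} + e_d to +-(e' e_{d-1} + e_d), so composing
   with c yields the required element of G_0. *)

Section Bilinearity.
Context {R : realType} {d : nat}.
Implicit Types (x y z : 'cV[R]_d.+1) (k : R).
Local Notation B := (@bform R d).

Lemma bformC x y : B x y = B y x.
Proof.
rewrite /bform [x ord0 0 * _]mulrC [x ord_max 0 * _]mulrC; congr (_ - _).
by apply: eq_bigr => i _; rewrite mulrC.
Qed.

Lemma bformDl x y z : B (x + y) z = B x z + B y z.
Proof.
rewrite /bform !mxE; under eq_bigr do rewrite mxE mulrDl.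
by rewrite big_split /=; ring.
Qed.

Lemma bformZl k x y : B (k *: x) y = k * B x y.
Proof.
rewrite /bform !mxE; under eq_bigr do rewrite mxE -mulrA.
by rewrite -mulr_sumr; ring.
Qed.

Lemma bformNl x y : B (- x) y = - B x y.
Proof. by rewrite -scaleN1r bformZl mulN1r. Qed.

Lemma bformBl x y z : B (x - y) z = B x z - B y z.
Proof. by rewrite bformDl bformNl. Qed.

Lemma bform0l x : B 0 x = 0.
Proof. by rewrite -(scale0r 0) bformZl mul0r. Qed.

Lemma bformDr x y z : B z (x + y) = B z x + B z y.
Proof. by rewrite bformC bformDl !(bformC z). Qed.

Lemma bformZr k x y : B y (k *: x) = k * B y x.
Proof. by rewrite bformC bformZl bformC. Qed.

Lemma bformNr x y : B y (- x) = - B y x.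
Proof. by rewrite bformC bformNl bformC. Qed.

Lemma bformBr x y z : B z (x - y) = B z x - B z y.
Proof. by rewrite bformDr bformNr. Qed.

Lemma bform_isotropic_comb x y k l : B x x = 0 -> B y y = 0 -> B x y = 0 ->
  B (k *: x + l *: y) (k *: x + l *: y) = 0.
Proof.
move=> hxx hyy hxy.
by rewrite !(bformDl, bformDr, bformZl, bformZr) hxx hyy hxy bformC hxy; ring.
Qed.

End Bilinearity.

Ltac bform_expand :=
  rewrite ?(bformDl, bformDr, bformBl, bformBr, bformZl, bformZr, bformNl, bformNr).

Definition sgn {R : realType} {d : nat} (j : 'I_d.+1) : R :=
  if (0 < j < d)%N then -1 else 1.

Section Coordinates.
Context {R : realType} {d : nat}.
Hypothesis hd : (1 <= d)%N.
Implicit Types (x y : 'cV[R]_d.+1).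
Local Notation B := (@bform R d).
Local Notation E := (@evec R d).

Lemma bform_sum x y : B x y = \sum_j (sgn j : R) * (x j 0 * y j 0).
Proof.
have h0d : (ord0 : 'I_d.+1) != ord_max by rewrite -(inj_eq val_inj) /= eq_sym -lt0n.
rewrite (bigD1 ord0) // (bigD1 ord_max) 1?eq_sym //= /sgn /= ltnn andbF !mul1r addrA.
congr (_ + _); rewrite -sumrN; apply: eq_big => [j|j /andP[-> ->]]; last by rewrite mulN1r.
by rewrite -!(inj_eq val_inj) /=; have := ltn_ord j; case: (val j) => [|[|n]] /=; lia.
Qed.

Lemma evecE j k : (j <= d)%N -> (k <= d)%N -> E k (inord j) 0 = (j == k)%:R.
Proof.
move=> hj hk; rewrite /evec mxE eqxx andbT; congr (_%:R).
have [->|hjk] := eqVneq j k; first by rewrite eqxx.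
by case: eqP => // /(congr1 (@nat_of_ord _)); rewrite !inordK // => /eqP; rewrite (negbTE hjk).
Qed.

Lemma bform_evec x k : (k <= d)%N ->
  B x (E k) = if (0 < k < d)%N then - x (inord k) 0 else x (inord k) 0.
Proof.
move=> hk; rewrite bform_sum (bigD1 (inord k)) //= big1 ?addr0.
  by rewrite /evec mxE eqxx mulr1 /sgn inordK //; case: ifP; rewrite ?mulN1r ?mul1r.
by move=> j hj; rewrite /evec mxE (negbTE hj) mulr0 mulr0.
Qed.

Lemma bform_evec0 x : B x (E 0) = x (inord 0) 0.
Proof. by rewrite bform_evec. Qed.

Lemma bform_evecd x : B x (E d) = x (inord d) 0.
Proof. by rewrite bform_evec // ltnn andbF. Qed.

Lemma ord_ends_or_middle (i : 'I_d.+1) : [\/ i = ord0, (0 < i < d)%N | i = ord_max].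
Proof.
have := ltn_ord i; case: (posnP i) => [i0|i_gt0] i_le.
  by constructor 1; apply/val_inj.
have [i_lt|i_ge] := ltnP i d; first by constructor 2; apply/andP.
by constructor 3; apply/val_inj => /=; lia.
Qed.

Lemma isotropic_eq0_ends {x} :
  B x x = 0 -> x (inord 0) 0 = 0 -> x (inord d) 0 = 0 -> x = 0.
Proof.
have -> : inord 0 = ord0 :> 'I_d.+1 by apply/val_inj; rewrite /= inordK.
have -> : inord d = ord_max :> 'I_d.+1 by apply/val_inj; rewrite /= inordK.
move=> + x0 xd; rewrite /bform x0 xd !mul0r add0r.
move=> /eqP; rewrite subr_eq0 eq_sym => /eqP.
move=> /(psumr_eq0P (fun j _ => sqr_ge0 (x j 0))) hmid.
apply/colP => i; rewrite mxE.
have [->|/hmid/eqP|->] // := ord_ends_or_middle i.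
by rewrite mulf_eq0 orbb => /eqP.
Qed.

Lemma isotropic_eq0_middle {x} :
  B x x = 0 -> (forall i : 'I_d.+1, (0 < i < d)%N -> x i 0 = 0) -> x = 0.
Proof.
move=> + hmid; rewrite /bform big1 => [|i /hmid ->]; last by rewrite mul0r.
rewrite subr0 => /eqP; rewrite paddr_eq0 ?sqr_ge0 // !mulf_eq0 !orbb => /andP[/eqP x0 /eqP xd].
by apply/colP => i; rewrite mxE; have [->|/hmid|->] := ord_ends_or_middle i.
Qed.

End Coordinates.

Ltac nat_decide :=
  repeat match goal with
  | |- context [(?m == ?n :> nat)] =>
      first [rewrite (_ : (m == n) = true); last by lia
            | rewrite (_ : (m == n) = false); last by lia]
  | |- context [(?m < ?n)%N] =>
      first [rewrite (_ : (m < n)%N = true); last by lia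
            | rewrite (_ : (m < n)%N = false); last by lia]
  end.

Ltac evec_compute hd :=
  bform_expand;
  repeat (rewrite (bform_evec hd); last by lia);
  repeat (rewrite evecE; [| by lia | by lia]);
  nat_decide; rewrite /=.

Section Reflections.
Context {R : realType} {d : nat}.
Hypothesis hd : (1 <= d)%N.
Implicit Types (u v w x y : 'cV[R]_d.+1) (L M : 'M[R]_d.+1).
Local Notation B := (@bform R d).
Local Notation O := (@Ogroup R d).

Lemma eq_mulmx_cV L M : (forall x, L *m x = M *m x) -> L = M.
Proof.
move=> h; apply/matrixP => i j.
by have /colP/(_ i) := h (delta_mx j 0); rewrite -!colE !mxE.
Qed.

(* The reflection in the hyperplane orthogonal to w; for isotropic w the factor
   2 / B w w is 0 and refl w is the identity. *)
Definition refl w : 'M[R]_d.+1 :=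
  \matrix_(i, j) ((i == j)%:R - 2 / B w w * (w i 0 * (sgn j * w j 0))).

Lemma reflE w x : refl w *m x = x - (2 * B w x / B w w) *: w.
Proof.
apply/colP => i; rewrite !mxE (bform_sum hd).
under eq_bigr do rewrite !mxE mulrBl.
rewrite sumrB (bigD1 i) //= eqxx mul1r big1 ?addr0 => [|j /negbTE]; last first.
  by rewrite eq_sym => ->; rewrite mul0r.
congr (_ - _); rewrite mulrAC -mulrA mulr_sumr mulr_suml.
by apply: eq_bigr => j _; ring.
Qed.

Lemma Ogroup1 : O 1%:M.
Proof. by move=> x y; rewrite !mul1mx. Qed.

Lemma Ogroup_mul L M : O L -> O M -> O (L *m M).
Proof. by move=> hL hM x y; rewrite -!mulmxA hL hM. Qed.

Lemma Ogroup_inj {L x} : O L -> L *m x = 0 -> x = 0.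
Proof.
move=> hL hx; apply/colP => i; rewrite mxE.
have := hL x (evec R d i); rewrite hx bform0l bform_evec ?inord_val -1?ltnS //.
by case: ifP => _ /esym /eqP; rewrite ?oppr_eq0 => /eqP.
Qed.

Lemma refl_Ogroup {w} : B w w != 0 -> O (refl w).
Proof.
by move=> hw x y; rewrite !reflE; bform_expand; rewrite (bformC x w) ?(bformC y w); field.
Qed.

Lemma refl_fix w x : B w x = 0 -> refl w *m x = x.
Proof. by move=> h; rewrite reflE h mulr0 mul0r scale0r subr0. Qed.

Lemma refl_isotropic_swap {x y} : B x x = 0 -> B y y = 0 -> B x y != 0 ->
  B (x - y) (x - y) != 0 /\ refl (x - y) *m x = y.
Proof.
move=> hx hy hxy; have hw : B (x - y) (x - y) = - 2 * B x y.
  by bform_expand; rewrite hx hy (bformC y x); ring.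
split; first by rewrite hw mulf_neq0 // oppr_eq0 pnatr_eq0.
rewrite reflE hw bformBl hx (bformC y x) (_ : 2 * (0 - B x y) / (-2 * B x y) = 1).
  by rewrite scale1r opprB addrC subrK.
by field.
Qed.

Lemma refl_invol {w} : B w w != 0 -> refl w *m refl w = 1%:M.
Proof.
move=> hw; apply: eq_mulmx_cV => x; rewrite -mulmxA !reflE mul1mx bformBr bformZr.
rewrite (_ : 2 * (B w x - 2 * B w x / B w w * B w w) / B w w = - (2 * B w x / B w w)).
  by rewrite scaleNr opprK subrK.
by field.
Qed.

Lemma reflN w : refl (- w) = refl w.
Proof. by apply/matrixP => i j; rewrite !mxE bformNl bformNr opprK; ring. Qed.

Lemma refl_comm {u v} : B u v = 0 -> refl u *m refl v = refl v *m refl u.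
Proof.
move=> huv; apply: eq_mulmx_cV => x; rewrite -!mulmxA !reflE.
by rewrite !bformBr !bformZr huv (bformC v u) huv !mulr0 !subr0 addrAC.
Qed.

End Reflections.

Section Continuity.
Context {R : realType}.

Lemma continuous_mx {T : topologicalType} m n (F : T -> 'M[R]_(m, n)) t :
  (forall i j, {for t, continuous (fun s => F s i j)}) -> {for t, continuous F}.
Proof.
move=> hF A /nbhs_ballP [e e0 eA].
apply: (@filterS _ _ _ (fun s => forall i j, ball (F t i j) e (F s i j))).
  by move=> s hs; apply: eA; split.
by do 2 apply: filter_forall => ?; exact: hF _ (nbhsx_ballx _ _ e0).
Qed.

Lemma continuous_sum {T : topologicalType} (I : Type) (r : seq I) (P : pred I)
    (F : I -> T -> R) :
  (forall i, P i -> continuous (F i)) -> continuous (fun t => \sum_(i <- r | P i) F i t).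
Proof. by move=> hF; apply: (continuous_big _ hF); exact: add_continuous. Qed.

Lemma continuous_mulmx2 n (Q P : 'M[R]_n) : continuous (fun X : 'M[R]_n => Q *m X *m P).
Proof.
move=> X; apply: continuous_mx => i j.
rewrite (_ : (fun Y => _) = fun Y : 'M[R]_n => \sum_l (\sum_k Q i k * Y k l) * P l j).
  apply: continuous_sum => l _ Y; apply: continuousM; last exact: cst_continuous.
  apply: continuous_sum => k _ {}Y; apply: continuousM; first exact: cst_continuous.
  exact: coord_continuous.
by apply: funext => Y; rewrite !mxE; apply: eq_bigr => l _; rewrite !mxE.
Qed.

Context {d : nat}.
Hypothesis hd : (1 <= d)%N.
Local Notation B := (@bform R d).
Local Notation cV := 'cV[R]_d.+1.

Lemma continuous_bform_diag : continuous (fun v => B v v).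
Proof.
rewrite (_ : (fun v => _) = fun v : cV => \sum_j sgn j * (v j 0 * v j 0)).
  apply: continuous_sum => j _ v; apply: (@continuousM R cV).
    exact: cst_continuous.
  by apply: continuousM; exact: coord_continuous.
by apply: funext => v; rewrite (bform_sum hd).
Qed.

Lemma continuous_refl w : B w w != 0 -> {for w, continuous refl}.
Proof.
move=> hw; apply: continuous_mx => i j; rewrite /refl.
under [X in {for w, continuous X}]eq_fun do rewrite mxE.
apply: (@continuousB R R^o cV); first exact: cst_continuous.
apply: (@continuousM R cV).
  apply: continuousM; first exact: cst_continuous.
  by apply: continuousV => //; exact: continuous_bform_diag.
apply: continuousM; first exact: coord_continuous.
by apply: continuousM; [exact: cst_continuous | exact: coord_continuous].
Qed.

End Continuity.

Section IdentityComponent.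
Context {R : realType} {d : nat}.
Hypothesis hd : (1 <= d)%N.
Implicit Types (r s : 'cV[R]_d.+1) (A P Q X Y : 'M[R]_d.+1).
Local Notation B := (@bform R d).
Local Notation O := (@Ogroup R d).

Lemma connected_component_mulmx2 {A X Q P} :
  connected_component O A X -> O Q -> O P ->
  connected_component O (Q *m A *m P) (Q *m X *m P).
Proof.
move=> hAX hQ hP; pose C := (fun Y => Q *m Y *m P) @` connected_component O A.
have OA : O A by apply: contrapT => /connected_component_out hA; rewrite hA in hAX.
apply: (@connected_component_max _ _ C); last by exists X.
- by exists A => //; exact: connected_component_refl.
- move=> _ [Y /connected_component_sub OY <-].
  by apply: Ogroup_mul => //; exact: Ogroup_mul.
- apply: connected_continuous_connected; first exact: component_connected.
  exact/continuous_subspaceT/continuous_mulmx2.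
Qed.

Lemma G0_Ogroup {X} : G0 X -> O X.
Proof. exact: connected_component_sub. Qed.

Lemma G0_1 : G0 (1%:M : 'M[R]_d.+1).
Proof. exact/connected_component_refl/Ogroup1. Qed.

Lemma G0_mul X Y : G0 X -> G0 Y -> G0 (X *m Y).
Proof.
move=> hX hY; have := connected_component_mulmx2 hY (G0_Ogroup hX) Ogroup1.
by rewrite !mulmx1; apply: connected_component_trans.
Qed.

Lemma G0_conj X Q : G0 X -> O Q -> Q *m Q = 1%:M -> G0 (Q *m X *m Q).
Proof.
move=> hX hQ hQQ; have := connected_component_mulmx2 hX hQ hQ.
by rewrite mulmx1 hQQ.
Qed.

Lemma bform_segment_anisotropic r s t :
  0 < B r r * B s s -> 0 <= B r s * B r r -> 0 <= t <= 1 ->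
  B ((1 - t) *: r + t *: s) ((1 - t) *: r + t *: s) != 0.
Proof.
move=> hrs hsr /andP[t0 t1]; set w := _ + _.
suff: 0 < B r r * B w w by apply: contraTneq => ->; rewrite mulr0 ltxx.
have -> : B w w = (1 - t) ^+ 2 * B r r + 2 * ((1 - t) * t) * B r s + t ^+ 2 * B s s.
  by rewrite /w; bform_expand; rewrite (bformC s r); ring.
have [t_lt1|t_ge1] := ltrP t 1; last first.
  have -> : t = 1 by apply/le_anti; rewrite t1 t_ge1.
  nra.
have hr : B r r != 0 by apply: contraTneq hrs => ->; rewrite mul0r ltxx.
have p1 : 0 < (1 - t) ^+ 2 * (B r r * B r r).
  by rewrite mulr_gt0 ?exprn_gt0 ?subr_gt0 // lt0r mulf_neq0 ?sqr_ge0.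
have p2 : 0 <= 2 * ((1 - t) * t) * (B r s * B r r).
  by apply: mulr_ge0 hsr; rewrite mulr_ge0 // mulr_ge0 // subr_ge0 ltW.
have p3 : 0 <= t ^+ 2 * (B r r * B s s) by rewrite mulr_ge0 ?sqr_ge0 ?ltW.
lra.
Qed.

Lemma connected_component_refl_refl r s :
  0 < B r r * B s s -> 0 <= B r s * B r r -> connected_component O (refl s) (refl r).
Proof.
move=> hrs hsr; pose w t := (1 - t) *: r + t *: s.
have w_anisotropic t : 0 <= t <= 1 -> B (w t) (w t) != 0.
  exact: bform_segment_anisotropic.
pose C := (refl \o w) @` `[0, 1].
have C_O : C `<=` O.
  by move=> _ [t ht <-]; apply/refl_Ogroup/w_anisotropic; move: ht; rewrite /= in_itv.
have C_connected : connected C.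
  apply: connected_continuous_connected; first exact: segment_connected.
  apply: continuous_in_subspaceT => t; rewrite inE /= in_itv /= => /w_anisotropic ht.
  apply: continuous_comp; last exact: continuous_refl ht.
  apply: continuousD; apply: continuousZr_tmp; last exact: cvg_id.
  by apply: continuousB; [exact: cst_continuous | exact: cvg_id].
apply: (connected_component_max _ C_O C_connected).
  by exists 1; rewrite /= ?in_itv /= ?ler01 ?lexx // /w subrr scale0r scale1r add0r.
by exists 0; rewrite /= ?in_itv /= ?ler01 ?lexx // /w subr0 scale1r scale0r addr0.
Qed.

Lemma G0_refl_mul r s : 0 < B r r * B s s -> G0 (refl r *m refl s).
Proof.
move=> hrs; have hs : B s s != 0 by apply: contraTneq hrs => ->; rewrite mulr0 ltxx.
(* Replacing s by -s does not change refl s and makes B r s * B r r >= 0. *)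
have [s' [hs's' hsr' <-]] : exists s',
    [/\ B s' s' = B s s, 0 <= B r s' * B r r & refl s' = refl s].
  have [hsr|hsr] := leP 0 (B r s * B r r); first by exists s.
  exists (- s); rewrite bformNl bformNr opprK reflN; split=> //.
  by rewrite bformNr mulNr oppr_ge0 ltW.
have hs' : B s' s' != 0 by rewrite hs's'.
have := connected_component_refl_refl r s'; rewrite hs's' => /(_ hrs hsr').
move=> /(connected_component_mulmx2 ^~ Ogroup1) /(_ (refl_Ogroup hd hs')).
by rewrite !mul1mx refl_invol.
Qed.

End IdentityComponent.

Section G0Cosets.
Context {R : realType} {d : nat}.
Hypothesis hd : (1 <= d)%N.
Variables (p n : 'cV[R]_d.+1).
Hypotheses (hp : 0 < bform p p) (hn : bform n n < 0) (hpn : bform p n = 0).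
Implicit Types (r : 'cV[R]_d.+1) (P : 'M[R]_d.+1).
Local Notation B := (@bform R d).
Local Notation O := (@Ogroup R d).

(* The sets coset_rep i j * G0 are the four components of O; we only need that
   their union is stable under left multiplication by reflections. *)
Definition coset_rep (i j : bool) : 'M[R]_d.+1 :=
  (if i then refl p else 1%:M) *m (if j then refl n else 1%:M).

Let p_neq0 : B p p != 0. Proof. by rewrite gt_eqF. Qed.
Let n_neq0 : B n n != 0. Proof. by rewrite lt_eqF. Qed.
Let pp : refl p *m refl p = 1%:M. Proof. exact: refl_invol. Qed.
Let nn : refl n *m refl n = 1%:M. Proof. exact: refl_invol. Qed.
Let pn : refl p *m refl n = refl n *m refl p. Proof. exact: refl_comm. Qed.

Lemma coset_rep_Ogroup i j : O (coset_rep i j).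
Proof.
by apply: Ogroup_mul; [case: i | case: j]; solve [exact: Ogroup1 | exact: refl_Ogroup].
Qed.

Lemma coset_rep_invol i j : coset_rep i j *m coset_rep i j = 1%:M.
Proof.
rewrite /coset_rep; case: i; case: j; rewrite ?mul1mx ?mulmx1 //.
by rewrite {1}pn -mulmxA (mulmxA (refl p)) pp mul1mx nn.
Qed.

Lemma coset_rep_mul_reflp i j : coset_rep i j *m refl p = coset_rep (~~ i) j.
Proof.
rewrite /coset_rep; case: i; case: j; rewrite /= ?mul1mx ?mulmx1 //.
by rewrite pn -mulmxA pp mulmx1.
Qed.

Lemma coset_rep_mul_refln i j : coset_rep i j *m refl n = coset_rep i (~~ j).
Proof.
by rewrite /coset_rep; case: i; case: j; rewrite /= ?mul1mx ?mulmx1 // -mulmxA nn mulmx1.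
Qed.

Definition G0_cosets P := exists i j, G0 (coset_rep i j *m P).

Lemma G0_cosets1 : G0_cosets 1%:M.
Proof. by exists false, false; rewrite /coset_rep !mulmx1; exact: G0_1. Qed.

Lemma G0_cosets_Ogroup P : G0_cosets P -> O P.
Proof.
move=> [i [j /G0_Ogroup hP]].
rewrite -[P]mul1mx -(coset_rep_invol i j) -mulmxA.
by apply: Ogroup_mul => //; exact: coset_rep_Ogroup.
Qed.

Lemma G0_cosets_refl P r : B r r != 0 -> G0_cosets P -> G0_cosets (refl r *m P).
Proof.
move=> hr [i [j hP]].
set c := coset_rep i j.
have step q k l : c *m q = coset_rep k l -> G0 (q *m refl r) -> G0_cosets (refl r *m P).
  move=> hq hqr; exists k, l; rewrite -hq.
  have -> : c *m q *m (refl r *m P) = c *m (q *m refl r) *m c *m (c *m P).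
    by rewrite -[in RHS]mulmxA (mulmxA c c) coset_rep_invol mul1mx !mulmxA.
  by apply: G0_mul hP; apply: G0_conj hqr _ (coset_rep_invol i j); exact: coset_rep_Ogroup.
have [r_pos|r_neg] := ltrP 0 (B r r).
  by apply: (step _ _ _ (coset_rep_mul_reflp i j)); apply: G0_refl_mul => //; exact: mulr_gt0.
apply: (step _ _ _ (coset_rep_mul_refln i j)); apply: G0_refl_mul => //.
by rewrite nmulr_rgt0 // lt_neqAle hr.
Qed.

End G0Cosets.

Section Normalization.
Context {R : realType} {d : nat}.
Hypothesis hd2 : (2 <= d)%N.
Local Notation B := (@bform R d).
Local Notation E := (@evec R d).
Local Notation rep := (coset_rep (E d) (E d.-1)).
Let hd : (1 <= d)%N. Proof. exact: ltnW hd2. Qed.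

Lemma bform_evecs_top :
  [/\ B (E d) (E d) = 1, B (E d.-1) (E d.-1) = -1 & B (E d) (E d.-1) = 0].
Proof. by split; evec_compute hd; rewrite ?mulr1 ?oppr0. Qed.

Lemma coset_rep_fix_e01 i j : (3 <= d)%N -> rep i j *m (E 0 + E 1) = E 0 + E 1.
Proof.
move=> hd3; rewrite /coset_rep -mulmxA.
by case: i; case: j; rewrite ?mul1mx ?(refl_fix hd) //; evec_compute hd; rewrite ?oppr0 ?addr0.
Qed.

Lemma coset_rep_null_top i j {e : R} : e = 1 \/ e = -1 ->
  exists s e' : R, [/\ s = 1 \/ s = -1, e' = 1 \/ e' = -1 &
    rep i j *m (e *: E d.-1 + E d) = s *: (e' *: E d.-1 + E d)].
Proof.
have reflp_g k : refl (E d) *m (k *: E d.-1 + E d) = - ((- k) *: E d.-1 + E d).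
  rewrite (reflE hd); evec_compute hd.
  by apply/colP => l; rewrite !mxE; field.
have refln_g k : refl (E d.-1) *m (k *: E d.-1 + E d) = (- k) *: E d.-1 + E d.
  rewrite (reflE hd); evec_compute hd.
  by apply/colP => l; rewrite !mxE; field.
have oppN k : k = 1 \/ k = -1 -> - k = 1 \/ - k = -1.
  by case=> ->; [right | left; rewrite opprK].
move=> he; rewrite /coset_rep -mulmxA; case: i; case: j; rewrite ?mul1mx.
- by exists (-1), e; rewrite refln_g reflp_g opprK scaleN1r; split => //; right.
- by exists (-1), (- e); rewrite reflp_g scaleN1r; split; [right | exact: oppN |].
- by exists 1, (- e); rewrite refln_g scale1r; split; [left | exact: oppN |].
- by exists 1, e; rewrite scale1r; split => //; left.
Qed.

End Normalization.

Definition independent {R : realType} {d : nat} (u v : 'cV[R]_d.+1) :=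
  forall k l : R, k *: u + l *: v = 0 -> k = 0 /\ l = 0.

Section IsotropicPair.
Context {R : realType} {d : nat}.
Hypothesis hd : (1 <= d)%N.
Context {a b : 'cV[R]_d.+1}.
Hypotheses (hind : independent a b)
  (haa : bform a a = 0) (hbb : bform b b = 0) (hab : bform a b = 0).
Implicit Types (u v x y : 'cV[R]_d.+1).
Local Notation B := (@bform R d).

Let isotropic_comb k l : B (k *: a + l *: b) (k *: a + l *: b) = 0.
Proof. exact: bform_isotropic_comb. Qed.

Lemma independent_fst_neq0 : a != 0.
Proof.
apply/eqP => a0; have := hind 1 0.
by rewrite a0 scaler0 scale0r addr0 => /(_ erefl) [/eqP]; rewrite oner_eq0.
Qed.

Lemma isotropic_pair_dim : (3 <= d)%N.
Proof.
rewrite leqNgt; apply/negP => d_le2.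
have mid1 (i : 'I_d.+1) : (0 < i < d)%N -> i = inord 1.
  by move=> /andP[i0 id]; apply/val_inj; rewrite /= inordK; lia.
have [_ /eqP] : b (inord 1) 0 = 0 /\ - a (inord 1) 0 = 0.
  apply/hind/(isotropic_eq0_middle hd (isotropic_comb _ _)) => i /mid1 ->.
  by rewrite !mxE; ring.
rewrite oppr_eq0 => /eqP a1.
have a0 : a = 0 by apply: (isotropic_eq0_middle hd haa) => i /mid1 ->.
by move: independent_fst_neq0; rewrite a0 eqxx.
Qed.

Lemma isotropic_pair_ends_det :
  a (inord 0) 0 * b (inord d) 0 - a (inord d) 0 * b (inord 0) 0 != 0.
Proof.
apply/eqP => det0.
have coef_a k : b (inord k) 0 *: a + (- a (inord k) 0) *: b = 0 -> a (inord k) 0 = 0.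
  by move=> /hind[_ /eqP]; rewrite oppr_eq0 => /eqP.
have ad : a (inord d) 0 = 0.
  by apply/coef_a/(isotropic_eq0_ends hd (isotropic_comb _ _)); rewrite !mxE; nra.
have a0 : a (inord 0) 0 = 0.
  by apply/coef_a/(isotropic_eq0_ends hd (isotropic_comb _ _)); rewrite !mxE; nra.
by move: independent_fst_neq0; rewrite (isotropic_eq0_ends hd haa a0 ad) eqxx.
Qed.

Lemma isotropic_pair_maximal x : B x a = 0 -> B x b = 0 -> B x x = 0 ->
  exists k l, x = k *: a + l *: b.
Proof.
move=> hxa hxb hxx; have := isotropic_pair_ends_det; set D := (X in X != 0) => hD.
exists ((x (inord 0) 0 * b (inord d) 0 - x (inord d) 0 * b (inord 0) 0) / D).
exists ((a (inord 0) 0 * x (inord d) 0 - a (inord d) 0 * x (inord 0) 0) / D).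
apply/eqP; rewrite -subr_eq0 opprD addrA; apply/eqP/(isotropic_eq0_ends hd).
- by bform_expand; rewrite hxa hxb hxx haa hbb hab !(bformC _ x) hxa hxb bformC hab; ring.
- by rewrite !mxE /D; field.
- by rewrite !mxE /D; field.
Qed.

Let hd3 := isotropic_pair_dim.
Local Notation E := (@evec R d).
Local Notation f := (E 0 + E 1).
Local Notation g e := (e *: E d.-1 + E d).

Let hd2 : (2 <= d)%N. Proof. exact: ltnW hd3. Qed.
Let hp : 0 < B (E d) (E d).
Proof. by case: (bform_evecs_top (R := R) hd2) => -> _ _; exact: ltr01. Qed.
Let hn : B (E d.-1) (E d.-1) < 0.
Proof. by case: (bform_evecs_top (R := R) hd2) => _ -> _; exact: ltrN10. Qed.
Let hpn : B (E d) (E d.-1) = 0. Proof. by case: (bform_evecs_top (R := R) hd2). Qed.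

Definition reach u v :=
  exists P, G0_cosets (E d) (E d.-1) P /\ P *m a = u /\ P *m b = v.

Lemma reach_init : reach a b.
Proof. by exists 1%:M; rewrite !mul1mx; split => //; exact: G0_cosets1. Qed.

Lemma reach_isotropic_pair {u v} : reach u v ->
  [/\ B u u = 0, B v v = 0, B u v = 0 & independent u v].
Proof.
move=> [P [/(G0_cosets_Ogroup hd _ _ hp hn hpn) OP [<- <-]]]; split; rewrite ?OP //.
move=> k l hkl; apply/hind/(Ogroup_inj hd OP).
by rewrite mulmxDr -!scalemxAr.
Qed.

Lemma reach_refl {u v} w : reach u v -> B w w != 0 -> reach (refl w *m u) (refl w *m v).
Proof.
move=> [P [hP [<- <-]]] hw; exists (refl w *m P); rewrite !mulmxA; split => //.
exact: (G0_cosets_refl hd _ _ hp hn hpn).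
Qed.

Lemma reach_move_fst {u v y} :
  reach u v -> B y y = 0 -> B u y != 0 -> exists v', reach y v'.
Proof.
move=> huv hy huy; have [hu _ _ _] := reach_isotropic_pair huv.
have [hw <-] := refl_isotropic_swap hd hu hy huy.
by exists (refl (u - y) *m v); exact: reach_refl.
Qed.

Lemma reach_move_snd {u v y} :
  reach u v -> B y y = 0 -> B v y != 0 -> B u y = 0 -> reach u y.
Proof.
move=> huv hy hvy huy; have [_ hv huv0 _] := reach_isotropic_pair huv.
have [hw <-] := refl_isotropic_swap hd hv hy hvy.
rewrite -(refl_fix hd (v - y) u); first exact: reach_refl.
by rewrite bformBl bformC huv0 bformC huy subrr.
Qed.

Lemma reach_e01 : exists v, reach f v.
Proof.
have hff : B f f = 0 by evec_compute hd; ring.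
have via y : B a y != 0 -> B y y = 0 -> B y f != 0 -> exists v, reach f v.
  move=> hay hy hyf; have [v hv] := reach_move_fst reach_init hy hay.
  exact: reach_move_fst hv hff hyf.
have [af|af] := eqVneq (B a f) 0; last exact: reach_move_fst reach_init hff af.
(* Otherwise go through e_0 - e_1 or e_d + e_1; a is not orthogonal to all three. *)
have [ay1|ay1] := eqVneq (B a (E 0 - E 1)) 0; last first.
  by apply: (via _ ay1); evec_compute hd; [ring | apply/eqP; lra].
have [ay2|ay2] := eqVneq (B a (E d + E 1)) 0; last first.
  by apply: (via _ ay2); evec_compute hd; [ring | apply/eqP; lra].
move: af ay1 ay2; evec_compute hd => af ay1 ay2.
have := independent_fst_neq0; rewrite (isotropic_eq0_ends hd haa) ?eqxx //; lra.
Qed.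

Lemma reach_e01_null_top {v} : reach f v -> exists e : R, (e = 1 \/ e = -1) /\ reach f (g e).
Proof.
move=> hv; have [hff hvv hfv indep_fv] := reach_isotropic_pair hv.
(* Otherwise v - v^0 (e_0 + e_1) would be isotropic with vanishing end coordinates. *)
have vd : v (inord d) 0 != 0.
  apply/eqP => vd; suff /indep_fv[_ /eqP] : (- v (inord 0) 0) *: f + 1 *: v = 0.
    by rewrite oner_eq0.
  apply: (isotropic_eq0_ends hd); first exact: bform_isotropic_comb.
    by rewrite -(bform_evec0 hd); evec_compute hd; ring.
  by rewrite -(bform_evecd hd); evec_compute hd; rewrite vd; ring.
have [e he hve] : exists2 e : R, (e = 1 \/ e = -1) & B v (g e) != 0.
  have [v1|v1] := eqVneq (B v (g 1)) 0; last by exists 1 => //; left.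
  exists (-1); first by right.
  by move: v1 vd; evec_compute hd => v1; apply: contra => /eqP v2; apply/eqP; lra.
exists e; split => //; apply: reach_move_snd hv _ hve _.
  by case: he => ->; evec_compute hd; ring.
by evec_compute hd; ring.
Qed.

End IsotropicPair.

Theorem lemma2 (R : realType) (d : nat) (hd : (1 <= d)%N)
  (a b : 'cV[R]_(d.+1))
  (hind : forall alpha beta : R, alpha *: a + beta *: b = 0 ->
            alpha = 0 /\ beta = 0)
  (haa : bform a a = 0) (hbb : bform b b = 0) (hab : bform a b = 0) :
  (4 <= d.+1)%N /\
  (exists (L : 'M[R]_(d.+1)) (s eps : R),
      G0 L /\ (s = 1 \/ s = -1) /\ (eps = 1 \/ eps = -1) /\
      L *m a = @evec R d 0 + @evec R d 1 /\
      L *m b = s *: (eps *: @evec R d d.-1 + @evec R d d)) /\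
  (forall x : 'cV[R]_(d.+1),
      bform x a = 0 -> bform x b = 0 -> bform x x = 0 ->
      exists alpha beta : R, x = alpha *: a + beta *: b).
Proof.
have hd3 := isotropic_pair_dim hd hind haa hbb hab.
split; first by [].
split; last exact: isotropic_pair_maximal.
have [v hv] := reach_e01 hd hind haa hbb hab.
have [e [he [P [[i [j hP]] [Pa Pb]]]]] := reach_e01_null_top hd hind haa hbb hab hv.
have [s [e' [hs he' hg]]] := coset_rep_null_top (ltnW hd3) i j he.
exists (coset_rep (evec R d d) (evec R d d.-1) i j *m P), s, e'.
do 3 split => //.
by split; rewrite -mulmxA ?Pa ?Pb; [exact: coset_rep_fix_e01 (ltnW hd3) i j hd3 | exact: hg].
Qed.
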